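(* There exists a constant $c_1>0$ such that for all sufficiently large $n$ with $t\le c_1 n$, for all $k$ with $30\, x\log n\le k\le c_1 n$ and every tuple $(k_1,\dots,k_x)$ of integers with $t_i\le k_i\le a_i$ and $\sum_i k_i=k$, we have $a_{k_1,\dots,k_x}<\frac{1}{n^{3x}}$.
   Context: Random graph model: $V$ is a set of $n$ vertices, $B\subseteq V$ a target set with $|B|=t$, each $v\in V$ has a prescribed out-degree $d_v$ with $2\le d_{\min}\le d_v\le d_{\max}$ (constants), and for each $v$ independently its out-neighbour set is chosen uniformly among all $d_v$-element subsets of $V$. Let $d_1,\dots,d_x$ be the distinct out-degrees, $a_i$ the number of vertices of out-degree $d_i$, $t_i$ the number of vertices of $B$ of out-degree $d_i$; $\log$ is the natural logarithm. For $S\supseteq B$ containing $k_i$ vertices of out-degree $d_i$, $R(k_1,\dots,k_x)$ is the probability that every vertex of $S$ has a directed path to $B$ lying inside $S$. For $k=\sum_i k_i$ with $t_i\le k_i\le a_i$, $a_{k_1,\dots,k_x}=\left(\prod_{i=1}^x\binom{a_i-t_i}{k_i-t_i}\left(\binom{n-k}{d_i}/\binom{n}{d_i}\right)^{a_i-k_i}\right)R(k_1,\dots,k_x)$, with the factor $(\binom{n-k}{d_i}/\binom{n}{d_i})^{a_i-k_i}$ equal to $1$ when $a_i=k_i$. *)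

From Stdlib Require Import Reals.
From mathcomp Require Import all_boot.
Set Implicit Arguments. Unset Strict Implicit. Unset Printing Implicit Defensive.

(* Vertex set V = 'I_n.  An outcome of the random graph is a function
   f assigning to every vertex v its out-neighbour set f v. *)

Definition valid n (d : 'I_n -> nat) (f : {ffun 'I_n -> {set 'I_n}}) : bool :=
  [forall v, #|f v| == d v].

Definition edge_in n (S : {set 'I_n}) (f : {ffun 'I_n -> {set 'I_n}}) : rel 'I_n :=
  fun u w => [&& u \in S, w \in S & w \in f u].

Definition reaches_B n (S B : {set 'I_n}) (f : {ffun 'I_n -> {set 'I_n}}) : bool :=
  [forall v in S, [exists b in B, connect (edge_in S f) v b]].

(* Probability (each out-neighbourhood independent and uniform among the
   d_v-subsets = uniform measure on admissible outcomes) that every vertex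
   of S has a directed path to B inside S. *)
Definition Rprob n (d : 'I_n -> nat) (B S : {set 'I_n}) : R :=
  Rdiv (INR #|[set f | valid d f && reaches_B S B f]|)
       (INR #|[set f | valid d f]|).

Definition degs n (d : 'I_n -> nat) : seq nat := undup [seq d v | v <- enum 'I_n].

(* number of vertices of A of out-degree i  (a_i = cnt setT, t_i = cnt B) *)
Definition cnt n (A : {set 'I_n}) (d : 'I_n -> nat) (i : nat) : nat :=
  #|[set v in A | d v == i]|.

(* a_{k_1,...,k_x}, the tuple being given as kk : (degree value) -> nat,
   k = sum of the k_i, and Rv = R(k_1,...,k_x). *)
Definition aval n (d : 'I_n -> nat) (B : {set 'I_n}) (kk : nat -> nat) (k : nat)
  (Rv : R) : R :=
  Rmult
    (foldr Rmult R1
       (map (fun i =>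
          Rmult (INR 'C(cnt setT d i - cnt B d i, kk i - cnt B d i))
                (pow (Rdiv (INR 'C(n - k, i)) (INR 'C(n, i))) (cnt setT d i - kk i)))
        (degs d)))
    Rv.

(* Take c_1 = 1/100.  Every vertex of S outside B needs an out-neighbour inside S; for
   a vertex of out-degree i this fails with probability q_i = C(n-k, i)/C(n, i), which
   is at most Q = (1 - k/n)^2 since i >= 2, so R <= prod_i (1 - q_i)^(k_i - t_i).
   Within a degree class the binomial theorem gives
   C(N, m) q^(N-m) (1-q)^m <= 2^m ((1 + Q)/2)^N, hence
   a_{k_1,...,k_x} <= 2^k (1 - k/n + k^2/(2n^2))^(n - t) <= exp((ln 2 - 0.985) k),
   which is below n^(-3x) as soon as k >= 30 x log n. *)
From HB Require Import structures.
From Stdlib Require Import Reals Lra Lia.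
From mathcomp Require Import all_boot zify.
Set Implicit Arguments. Unset Strict Implicit.

HB.instance Definition _ := Monoid.isComLaw.Build R R1 Rmult
  (fun x y z => esym (Rmult_assoc x y z)) Rmult_comm Rmult_1_l.

Lemma INR_muln a b : INR (a * b) = Rmult (INR a) (INR b).
Proof. by rewrite -multE mult_INR. Qed.

Lemma INR_expn a b : INR (a ^ b) = pow (INR a) b.
Proof. by elim: b => [|b IH]; rewrite ?expn0 // expnS INR_muln IH. Qed.

Lemma INR_subn a b : b <= a -> INR (a - b) = Rminus (INR a) (INR b).
Proof. by move=> le_ba; rewrite -minusE minus_INR //; apply/leP. Qed.

Lemma INR_prod (I : Type) (r : seq I) (P : pred I) (F : I -> nat) :
  INR (\prod_(i <- r | P i) F i) = \big[Rmult/R1]_(i <- r | P i) INR (F i).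
Proof. exact: (big_morph INR INR_muln). Qed.

Lemma bin_subn_mul_exp_le n k i : k <= n -> 'C(n - k, i) * n ^ i <= 'C(n, i) * (n - k) ^ i.
Proof.
move=> le_kn; elim: i => [|i IH]; first by rewrite !bin0 !expn0.
rewrite -(@leq_pmul2l i.+1) // mulnA mul_bin_left [X in _ <= X]mulnA mul_bin_left !expnS.
have -> : (n - k - i) * 'C(n - k, i) * (n * n ^ i)
          = ((n - k - i) * n) * ('C(n - k, i) * n ^ i) by lia.
have -> : (n - i) * 'C(n, i) * ((n - k) * (n - k) ^ i)
          = ((n - i) * (n - k)) * ('C(n, i) * (n - k) ^ i) by lia.
by apply: leq_mul => //; nia.
Qed.

Section RealBounds.
Local Open Scope R_scope.

Lemma prodR_ge0 (I : Type) (r : seq I) (P : pred I) (F : I -> R) :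
  (forall i, P i -> 0 <= F i) -> 0 <= \big[Rmult/R1]_(i <- r | P i) F i.
Proof. by move=> F_ge0; apply: big_ind => // [|x y]; [lra | exact: Rmult_le_pos]. Qed.

Lemma prodR_le (I : eqType) (r : seq I) (F G : I -> R) :
  (forall i, i \in r -> 0 <= F i <= G i) ->
  \big[Rmult/R1]_(i <- r) F i <= \big[Rmult/R1]_(i <- r) G i.
Proof.
move=> FG; rewrite !big_seq.
have : 0 <= \big[Rmult/R1]_(i <- r | i \in r) F i <= \big[Rmult/R1]_(i <- r | i \in r) G i.
  by apply: (big_ind2 (fun x y => 0 <= x <= y)) => [|x1 x2 y1 y2 ? ?|]; [lra | nra | ].
by case.
Qed.

Lemma prodR_pow (I : Type) (r : seq I) (x : R) (e : I -> nat) :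
  \big[Rmult/R1]_(i <- r) x ^ e i = x ^ (\sum_(i <- r) e i).
Proof. by elim: r => [|i r IH]; rewrite ?big_nil ?big_cons // IH -pow_add plusE. Qed.

Lemma iter_Rmult_pow x m : iter m (Rmult x) R1 = x ^ m.
Proof. by elim: m => //= m ->. Qed.

Lemma pow_le_pow_le1 x m p : 0 <= x <= 1 -> (m <= p)%N -> x ^ p <= x ^ m.
Proof.
move=> x01 le_mp; rewrite -(subnKC le_mp) -plusE pow_add.
have : x ^ (p - m) <= 1 by rewrite -(pow1 (p - m)); apply: pow_incr.
have := pow_le x m (proj1 x01); nra.
Qed.

Lemma binomial_term_le (N m : nat) (a b : R) : 0 <= a -> 0 <= b ->
  INR 'C(N, m) * a ^ m * b ^ (N - m) <= (a + b) ^ N.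
Proof.
move=> a_ge0 b_ge0; elim: N m => [|N IH] [|m].
- by rewrite /=; lra.
- by rewrite bin0n /=; lra.
- by rewrite bin0 subn0 /= !Rmult_1_l; apply: (pow_incr b (a + b) N.+1); lra.
have step_a := Rmult_le_compat_l a _ _ a_ge0 (IH m).
have step_b : INR 'C(N, m.+1) * a ^ m.+1 * b ^ (N.+1 - m.+1) <= b * (a + b) ^ N.
  have [lt_mN | le_Nm] := ltnP m N.
    rewrite -[(N.+1 - m.+1)%N](subnSK lt_mN) -(tech_pow_Rmult b).
    have := Rmult_le_compat_l b _ _ b_ge0 (IH m.+1); nra.
  rewrite bin_small ?ltnS // INR_0 !Rmult_0_l.
  by apply: Rmult_le_pos => //; apply: pow_le; lra.
rewrite binS plus_INR subSS /= in step_b *.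
have := pow_le b (N - m) b_ge0; nra.
Qed.

Lemma binomial_tail_le (N m : nat) (q Q : R) : (m <= N)%N -> 0 <= q <= Q -> Q <= 1 ->
  INR 'C(N, m) * q ^ (N - m) * (1 - q) ^ m <= 2 ^ m * ((1 + Q) / 2) ^ N.
Proof.
move=> le_mN q_bounds Q_le1.
have two_m_gt0 : 0 < 2 ^ m by apply: pow_lt; lra.
have term := binomial_term_le N m (a := (1 - q) / 2) (b := q) ltac:(lra) ltac:(lra).
have avg : ((1 - q) / 2 + q) ^ N <= ((1 + Q) / 2) ^ N by apply: pow_incr; lra.
rewrite [_ ^ m]Rpow_mult_distr pow_inv in term.
have -> : INR 'C(N, m) * q ^ (N - m) * (1 - q) ^ m
  = 2 ^ m * (INR 'C(N, m) * ((1 - q) ^ m * / 2 ^ m) * q ^ (N - m)) by field; lra.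
by apply: Rmult_le_compat_l; lra.
Qed.

Lemma ln_2_lt : ln 2 < 0.8.
Proof.
have exp_02 := exp_ineq1 0.2 ltac:(lra).
have exp_08 : exp 0.8 = exp 0.2 * exp 0.2 * exp 0.2 * exp 0.2 by rewrite -!exp_plus; f_equal; lra.
have : 2 < exp 0.8.
  rewrite exp_08; have : 1.2 * 1.2 * 1.2 * 1.2 <= exp 0.2 * exp 0.2 * exp 0.2 * exp 0.2.
    by repeat apply: Rmult_le_compat; lra.
  lra.
by move/(ln_increasing 2 _ ltac:(lra)); rewrite ln_exp.
Qed.

Lemma sub_div_bounds (n k : nat) : (k <= n)%N -> (0 < n)%N ->
  0 <= (INR n - INR k) / INR n <= 1.
Proof.
move=> /leP/le_INR le_kn /ltP/lt_0_INR n_gt0.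
split; first by apply: Rmult_le_pos; [lra | left; apply: Rinv_0_lt_compat].
by apply: (Rmult_le_reg_r (INR n)) => //; field_simplify; have := pos_INR k; lra.
Qed.

Lemma bin_ratio_le_sq (n k i : nat) : (k <= n)%N -> (2 <= i <= n)%N ->
  0 <= INR 'C(n - k, i) / INR 'C(n, i) <= ((INR n - INR k) / INR n) ^ 2.
Proof.
move=> le_kn /andP[le_2i le_in].
have C_gt0 : 0 < INR 'C(n, i) by apply: lt_0_INR; apply/ltP; rewrite bin_gt0.
have n_pos : (0 < n)%N by lia.
have n_gt0 : 0 < INR n by apply: lt_0_INR; apply/ltP.
split; first by apply: Rmult_le_pos; [apply: pos_INR | left; apply: Rinv_0_lt_compat].
have y01 := sub_div_bounds le_kn n_pos.
apply: Rle_trans (pow_le_pow_le1 y01 le_2i).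
have cross : INR 'C(n - k, i) * INR n ^ i <= INR 'C(n, i) * (INR n - INR k) ^ i.
  rewrite -INR_subn // -!INR_expn -!INR_muln; apply: le_INR; apply/leP.
  exact: bin_subn_mul_exp_le.
have ni_gt0 : 0 < INR n ^ i by apply: pow_lt.
rewrite /Rdiv Rpow_mult_distr pow_inv.
apply: (Rmult_le_reg_r (INR 'C(n, i) * INR n ^ i)); first nra.
by field_simplify; lra.
Qed.

Lemma pow2_mul_pow_lt_inv_pow (n k t x M : nat) : (2 <= n)%N -> (1 <= x)%N -> (M <= k)%N ->
  INR t <= 1 / 100 * INR n -> INR k <= 1 / 100 * INR n -> INR 30 * INR x * ln (INR n) <= INR k ->
  2 ^ M * ((1 + ((INR n - INR k) / INR n) ^ 2) / 2) ^ (n - t) < / INR n ^ (3 * x).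
Proof.
move=> n_ge2 x_ge1 M_le_k t_small k_small k_large.
have n_ge2R : 2 <= INR n by have := le_INR 2 n (elimT leP n_ge2); rewrite /=; lra.
have x_ge1R : 1 <= INR x by have := le_INR 1 x (elimT leP x_ge1); rewrite /=; lra.
have M_le_kR : INR M <= INR k by apply: le_INR; apply/leP.
have ln_n_gt0 : 0 < ln (INR n) by rewrite -ln_1; apply: ln_increasing; lra.
have k_ge0 := pos_INR k; have t_ge0 := pos_INR t; have M_ge0 := pos_INR M.
rewrite INR_IZR_INZ /= in k_large.
set u := INR k / INR n.
have k_eq : INR k = u * INR n by rewrite /u; field; lra.
have u_bounds : 0 <= u <= 1 / 100 by split; apply: (Rmult_le_reg_r (INR n)); lra.
have -> : (INR n - INR k) / INR n = 1 - u by rewrite /u; field; lra.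
set r := (1 + (1 - u) ^ 2) / 2.
have r_gt0 : 0 < r by rewrite /r; have := pow2_ge_0 (1 - u); lra.
have lhs_gt0 : 0 < 2 ^ M * r ^ (n - t) by apply: Rmult_lt_0_compat; apply: pow_lt; lra.
have rhs_gt0 : 0 < INR n ^ (3 * x) by apply: pow_lt; lra.
apply: ln_lt_inv => //; first exact: Rinv_0_lt_compat.
rewrite ln_Rinv // ln_mult; try (apply: pow_lt; lra).
rewrite !ln_pow; try lra.
rewrite INR_muln INR_subn; last by apply/leP/INR_le; lra.
have ln_r : ln r <= r - 1 by have := exp_ineq1_le (ln r); rewrite exp_ln //; lra.
have ln_2_bounds := conj ln_lt_2 ln_2_lt.
have ln_r_le : (INR n - INR t) * ln r <= (INR n - INR t) * (r - 1).
  by apply: Rmult_le_compat_l; lra.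
have r_decay : (INR n - INR t) * (r - 1) <= - 0.985 * INR k.
  have decay : 0.995 * u <= 1 - r by rewrite /r; nra.
  have : 0.99 * INR n * (0.995 * u) <= (INR n - INR t) * (1 - r).
    by apply: Rmult_le_compat; nra.
  rewrite k_eq; nra.
(* M ln 2 + (n - t) ln r <= (0.8 - 0.985) k <= -5.55 x ln n. *)
have : 0 < INR x * ln (INR n) by nra.
rewrite /= in M_le_kR *; nra.
Qed.

End RealBounds.

Lemma card_ffun_family (aT rT : finType) (F : aT -> {set rT}) :
  #|[set f : {ffun aT -> rT} | [forall x, f x \in F x]]| = \prod_x #|F x|.
Proof.
have := card_family (fun x => mem (F x)); rewrite foldrE big_map -big_enum /= => <-.
by apply: eq_card => f; rewrite inE.
Qed.

Section DegreeClasses.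
Variables (n : nat) (d : 'I_n -> nat).

Lemma mem_degs v : d v \in degs d.
Proof. by rewrite mem_undup; apply: map_f; rewrite mem_enum. Qed.

Lemma big_degs (T : Type) (idx : T) (op : Monoid.com_law idx) (A : {set 'I_n}) (G : 'I_n -> T) :
  \big[op/idx]_(v in A) G v = \big[op/idx]_(i <- degs d) \big[op/idx]_(v in A | d v == i) G v.
Proof.
rewrite [RHS](exchange_big_dep predT) //= [LHS]big_mkcond; apply: eq_bigr => v _.
case: (v \in A); last by rewrite big_pred0.
rewrite -big_filter (eq_filter (a2 := pred1 (d v))) => [|i]; last by rewrite /= eq_sym.
by rewrite filter_pred1_uniq ?undup_uniq ?mem_degs // big_seq1.
Qed.

Lemma sum_cnt (A : {set 'I_n}) : \sum_(i <- degs d) cnt A d i = #|A|.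
Proof.
rewrite -sum1_card (big_degs _ A); apply: eq_bigr => i _.
by rewrite sum1_card; apply: eq_card => v; rewrite inE.
Qed.

Lemma prodR_degs (A : {set 'I_n}) (F : nat -> R) :
  \big[Rmult/R1]_(v in A) F (d v) = \big[Rmult/R1]_(i <- degs d) pow (F i) (cnt A d i).
Proof.
rewrite (big_degs _ A); apply: eq_bigr => i _.
rewrite (eq_bigr (fun=> F i)) => [|v /andP[_ /eqP ->] //].
by rewrite big_const -iter_Rmult_pow; congr iter; apply: eq_card => v; rewrite inE.
Qed.

Lemma cnt_setID (A C : {set 'I_n}) i : cnt A d i = cnt (A :&: C) d i + cnt (A :\: C) d i.
Proof.
rewrite /cnt -(cardsID C [set v in A | d v == i]).
by congr (_ + _); apply: eq_card => v; rewrite !inE; case: (v \in A); case: (v \in C); case: (d v == i).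
Qed.

Lemma cnt_subset (A C : {set 'I_n}) i : A \subset C -> (cnt A d i <= cnt C d i)%N.
Proof.
move=> AC; apply: subset_leq_card; apply/subsetP => v.
by rewrite !inE => /andP[/(subsetP AC) -> ->].
Qed.

Lemma card_valid : #|[set f | valid d f]| = \prod_v 'C(n, d v).
Proof.
rewrite (eq_bigr (fun v => #|[set X : {set 'I_n} | #|X| == d v]|)); last first.
  by move=> v _; rewrite card_draws card_ord.
rewrite -card_ffun_family; apply: eq_card => f.
by rewrite !inE; apply: eq_forallb => v; rewrite inE.
Qed.

Variables B S : {set 'I_n}.
Hypothesis BS : B \subset S.

(* The first edge of a path from v in S :\: B to B leaves v towards a vertex of S. *)
Lemma card_reaches_B_le : #|[set f | valid d f && reaches_B S B f]| <=
  \prod_v (if v \in S :\: B then 'C(n, d v) - 'C(n - #|S|, d v) else 'C(n, d v)).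
Proof.
pose Avoid v := [set X : {set 'I_n} | X \subset ~: S & #|X| == d v].
pose Valid v := [set X : {set 'I_n} | #|X| == d v].
pose F v := if v \in S :\: B then Valid v :\: Avoid v else Valid v.
rewrite (eq_bigr (fun v => #|F v|)); last first.
  move=> v _; rewrite /F; case: ifP => _; rewrite ?cardsD card_draws card_ord //.
  rewrite (setIidPr _); last by apply/subsetP => X; rewrite !inE => /andP[_ ->].
  by rewrite cards_draws; congr (_ - 'C(_, _)); have := cardsC S; rewrite card_ord; lia.
rewrite -card_ffun_family; apply: subset_leq_card.
apply/subsetP => f; rewrite !inE => /andP[/forallP valid_f /forall_inP reach_f].
apply/forallP => v; rewrite /F; case: ifP => [/setDP[vS vNB]|_]; rewrite !inE ?valid_f //.
rewrite andbT; apply/negP => /andP[/subsetP out_f _].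
have /existsP[b /andP[bB /connectP[[|w p] /= path_vb b_last]]] := reach_f v vS.
  by move: vNB; rewrite -b_last bB.
move: path_vb => /andP[/and3P[_ wS wfv] _].
by move: (out_f w wfv); rewrite inE wS.
Qed.

End DegreeClasses.

Definition avoid_prob (n k i : nat) : R := Rdiv (INR 'C(n - k, i)) (INR 'C(n, i)).

Section ReachProbability.
Local Open Scope R_scope.
Variables (n : nat) (d : 'I_n -> nat) (B S : {set 'I_n}).
Hypotheses (BS : B \subset S) (d_le_n : forall v, (d v <= n)%N).

Lemma Rprob_le_prod :
  Rprob d B S <= \big[Rmult/R1]_(i <- degs d) (1 - avoid_prob n #|S| i) ^ cnt (S :\: B) d i.
Proof.
have C_gt0 v : 0 < INR 'C(n, d v) by apply: lt_0_INR; apply/ltP; rewrite bin_gt0.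
rewrite -prodR_degs /Rprob card_valid INR_prod.
set C := \big[Rmult/R1]_(v < n) INR 'C(n, d v).
have C_prod_gt0 : 0 < C by apply: (big_ind (fun x => 0 < x)) => // [|x y]; [lra | exact: Rmult_lt_0_compat].
have /leP/le_INR := card_reaches_B_le d BS; rewrite INR_prod => count_le.
apply: Rle_trans (Rmult_le_compat_r (/ C) _ _ _ count_le) _.
  by left; apply: Rinv_0_lt_compat.
rewrite (big_morph Rinv Rinv_mult Rinv_1) -big_split /= [X in _ <= X]big_mkcond.
apply: Req_le; apply: eq_bigr => v _; case: ifP => _; last by field; have := C_gt0 v; lra.
rewrite INR_subn ?leq_bin2l ?leq_subr // /avoid_prob; field; have := C_gt0 v; lra.
Qed.

Hypothesis d_ge2 : forall v, (2 <= d v)%N.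

Let Q := ((INR n - INR #|S|) / INR n) ^ 2.

Lemma avoid_prob_le_sq i : i \in degs d -> 0 <= avoid_prob n #|S| i <= Q /\ Q <= 1.
Proof.
rewrite mem_undup => /mapP[v _ ->].
have S_le_n : (#|S| <= n)%N by rewrite -[X in (_ <= X)%N]card_ord max_card.
split; first exact: bin_ratio_le_sq S_le_n (introT andP (conj (d_ge2 v) (d_le_n v))).
have n_gt0 : (0 < n)%N by have := d_ge2 v; have := d_le_n v; lia.
by have := pow_incr _ 1 2 (sub_div_bounds S_le_n n_gt0); rewrite pow1.
Qed.

Lemma avoid_prob_class_le i : i \in degs d ->
  INR 'C(cnt setT d i - cnt B d i, cnt S d i - cnt B d i) *
    avoid_prob n #|S| i ^ (cnt setT d i - cnt S d i) * (1 - avoid_prob n #|S| i) ^ cnt (S :\: B) d i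
  <= 2 ^ cnt (S :\: B) d i * ((1 + Q) / 2) ^ cnt (~: B) d i.
Proof.
move=> /avoid_prob_le_sq [q_bounds Q_le1].
have cntT := cnt_setID d setT B i; rewrite setTI setTD in cntT.
have cntS := cnt_setID d S B i; rewrite (setIidPr BS) in cntS.
have SB_le : (cnt (S :\: B) d i <= cnt (~: B) d i)%N.
  by apply: cnt_subset; rewrite setDE subsetIr.
have -> : (cnt setT d i - cnt B d i = cnt (~: B) d i)%N by lia.
have -> : (cnt S d i - cnt B d i = cnt (S :\: B) d i)%N by lia.
have -> : (cnt setT d i - cnt S d i = cnt (~: B) d i - cnt (S :\: B) d i)%N by lia.
exact: binomial_tail_le.
Qed.

Lemma aval_le : aval d B (cnt S d) #|S| (Rprob d B S) <= 2 ^ #|S :\: B| * ((1 + Q) / 2) ^ (n - #|B|).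
Proof.
rewrite /aval foldrE big_map.
set T := \big[Rmult/R1]_(i <- degs d) _.
have T_ge0 : 0 <= T.
  rewrite /T big_seq; apply: prodR_ge0 => i /avoid_prob_le_sq [[q_ge0 _] _].
  by apply: Rmult_le_pos; [apply: pos_INR | apply: pow_le].
apply: (Rle_trans _ _ _ (Rmult_le_compat_l _ _ _ T_ge0 Rprob_le_prod)).
rewrite /T -big_split.
apply: (Rle_trans _ _ _ (prodR_le (G := fun i => 2 ^ _ * ((1 + Q) / 2) ^ _) _)).
  move=> i i_degs; split; last exact: avoid_prob_class_le.
  have [[q_ge0 q_le] Q_le1] := avoid_prob_le_sq i_degs.
  apply: Rmult_le_pos; [apply: Rmult_le_pos; [apply: pos_INR|] | ]; apply: pow_le => //; lra.
rewrite big_split !prodR_pow !sum_cnt; apply: Req_le.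
by congr (_ * _ ^ _); have := cardsC B; rewrite card_ord; lia.
Qed.

End ReachProbability.

Theorem lemma9 :
  forall dmin dmax : nat, 2 <= dmin <= dmax ->
  exists c1 : R, Rlt 0 c1 /\
  exists N : nat, forall n : nat, N <= n ->
  forall (d : 'I_n -> nat) (B : {set 'I_n}),
    (forall v, dmin <= d v <= dmax) ->
    Rle (INR #|B|) (Rmult c1 (INR n)) ->
    forall kk : nat -> nat,
      (forall i, i \in degs d -> cnt B d i <= kk i <= cnt setT d i) ->
      let k := foldr addn 0 [seq kk i | i <- degs d] in
      Rle (Rmult (Rmult (INR 30) (INR (size (degs d)))) (ln (INR n))) (INR k) ->
      Rle (INR k) (Rmult c1 (INR n)) ->
      forall S : {set 'I_n}, B \subset S ->
        (forall i, i \in degs d -> cnt S d i = kk i) ->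
        Rlt (aval d B kk k (Rprob d B S)) (Rinv (pow (INR n) (3 * size (degs d)))).
Proof.
move=> dmin dmax /andP[dmin_ge2 dmin_le_dmax].
exists (Rdiv 1 100); split; first lra.
exists (dmax + 2) => n n_large d B d_range B_small kk _ k k_large k_small S BS kk_cnt.
have d_ge2 v : 2 <= d v by have := d_range v; lia.
have d_le_n v : d v <= n by have := d_range v; lia.
have k_S : k = #|S|.
  by rewrite /k foldrE big_map -(sum_cnt d); apply: eq_big_seq => i /kk_cnt ->.
have -> : aval d B kk k (Rprob d B S) = aval d B (cnt S d) #|S| (Rprob d B S).
  by rewrite /aval k_S; congr (Rmult (foldr _ _ _) _); apply/eq_in_map => i /kk_cnt ->.
apply: Rle_lt_trans (aval_le BS d_le_n d_ge2) _.
rewrite k_S in k_large k_small.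
apply: pow2_mul_pow_lt_inv_pow => //; first lia.
- have n_gt0 : 0 < n by lia.
  by have := mem_degs d (Ordinal n_gt0); case: (degs d).
- exact/subset_leq_card/subsetDl.
Qed.
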